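(* Let $C$ be a self-dual code over $\mathbb{Z}_4+u\mathbb{Z}_4$ of length $n$. Then (a) $\phi(C)$ is a formally self-dual code over $\mathbb{Z}_4$ of length $2n$; (b) $\mu(C)$ is a self-orthogonal code over $\mathbb{Z}_4$ of length $n$, and $\alpha(C)$ is a self-orthogonal code over $\mathbb{F}_2+u\mathbb{F}_2$; (c) if $\nu(C)$ is self-orthogonal, then $\phi(C)$ is a self-dual code over $\mathbb{Z}_4$ of length $2n$.
   Context: $\mathbb{Z}_4+u\mathbb{Z}_4$ is the commutative ring of characteristic $4$ with $u^2=0$; $\mathbb{F}_2+u\mathbb{F}_2$ is the commutative ring $\{0,1,u,1+u\}$ of characteristic $2$ with $u^2=0$. A linear code of length $n$ over a ring $R$ is an $R$-submodule of $R^n$; its dual is taken with respect to the Euclidean inner product $\sum_i x_iy_i$ in $R$; self-orthogonal means $C\subseteq C^\perp$, self-dual means $C=C^\perp$. A linear code over $\mathbb{Z}_4$ is formally self-dual if it has the same Lee weight enumerator as its dual (Lee weight on $\mathbb{Z}_4$: $0,1,2,1$ for $0,1,2,3$). Maps: $\phi:(\mathbb{Z}_4+u\mathbb{Z}_4)^n\to\mathbb{Z}_4^{2n}$, $\phi(\overline{a}+u\overline{b})=(\overline{b},\overline{a}+\overline{b})$; $\mu(\overline{a}+u\overline{b})=\overline{a}$; $\nu(\overline{a}+u\overline{b})=\overline{b}$ (for $\overline{a},\overline{b}\in\mathbb{Z}_4^n$); $\alpha$ is coordinatewise reduction modulo $2$ from $\mathbb{Z}_4+u\mathbb{Z}_4$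 to $\mathbb{F}_2+u\mathbb{F}_2$. *)

From HB Require Import structures.
From mathcomp Require Import all_boot all_order all_algebra.
Set Implicit Arguments. Unset Strict Implicit. Unset Printing Implicit Defensive.
Import GRing.Theory.
Local Open Scope ring_scope.

(* The ring S + uS (u^2 = 0), for a finite commutative ring S.         *)
(* An element a + u b is represented by the pair (a, b) : S * S.       *)
(* We use S = 'Z_4 (giving Z4 + uZ4) and S = 'Z_2 (giving F2 + uF2).   *)

Definition uzero (S : finComNzRingType) : S * S := (0, 0).
Definition uadd (S : finComNzRingType) (x y : S * S) : S * S :=
  (x.1 + y.1, x.2 + y.2).
(* (a1 + u b1)(a2 + u b2) = a1 a2 + u (a1 b2 + b1 a2) since u^2 = 0 *)
Definition umul (S : finComNzRingType) (x y : S * S) : S * S :=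
  (x.1 * y.1, x.1 * y.2 + x.2 * y.1).

Notation uword S n := {ffun 'I_n -> (S * S)%type}.

Definition uzero_word (S : finComNzRingType) n : uword S n := [ffun _ => uzero S].
Definition uadd_word (S : finComNzRingType) n (x y : uword S n) : uword S n :=
  [ffun i => uadd (x i) (y i)].
Definition uscale_word (S : finComNzRingType) n (r : S * S) (x : uword S n)
  : uword S n := [ffun i => umul r (x i)].

Definition uip (S : finComNzRingType) n (x y : uword S n) : S * S :=
  \big[@uadd S/uzero S]_(i < n) umul (x i) (y i).

Definition ulinear (S : finComNzRingType) n (C : {set uword S n}) : Prop :=
  [/\ uzero_word S n \in C,
      (forall x y, x \in C -> y \in C -> uadd_word x y \in C) &
      (forall r x, x \in C -> uscale_word r x \in C)].

Definition udual (S : finComNzRingType) n (C : {set uword S n}) : {set uword S n} :=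
  [set y | [forall x in C, uip x y == uzero S]].

Definition u_self_orthogonal (S : finComNzRingType) n (C : {set uword S n}) : Prop :=
  ulinear C /\ C \subset udual C.
Definition u_self_dual (S : finComNzRingType) n (C : {set uword S n}) : Prop :=
  ulinear C /\ C = udual C.

Notation Z4 := 'Z_4.
Notation zword n := {ffun 'I_n -> Z4}.

Definition zip4 n (x y : zword n) : Z4 := \sum_(i < n) x i * y i.

Definition zlinear n (C : {set zword n}) : Prop :=
  [/\ [ffun _ => 0] \in C,
      (forall x y, x \in C -> y \in C -> [ffun i => x i + y i] \in C) &
      (forall (r : Z4) x, x \in C -> [ffun i => r * x i] \in C)].

Definition zdual n (C : {set zword n}) : {set zword n} :=
  [set y | [forall x in C, zip4 x y == 0]].

Definition z_self_orthogonal n (C : {set zword n}) : Prop :=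
  zlinear C /\ C \subset zdual C.
Definition z_self_dual n (C : {set zword n}) : Prop :=
  zlinear C /\ C = zdual C.

Definition leeZ4 (x : Z4) : nat :=
  match val x with 0%N => 0%N | 2%N => 2%N | _ => 1%N end.
Definition lee_weight n (x : zword n) : nat := (\sum_(i < n) leeZ4 (x i))%N.

(* number of codewords of Lee weight w: the coefficients of the Lee weight
   enumerator *)
Definition lee_count n (C : {set zword n}) (w : nat) : nat :=
  #|[set c in C | lee_weight c == w]|.

Definition formally_self_dual n (C : {set zword n}) : Prop :=
  zlinear C /\ forall w, lee_count C w = lee_count (zdual C) w.

(* phi(a + u b) = (b, a + b) *)
Definition phi n (c : uword Z4 n) : zword (n + n) :=
  [ffun i => match split i with
             | inl j => (c j).2
             | inr j => (c j).1 + (c j).2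
             end].
Definition mu n (c : uword Z4 n) : zword n := [ffun i => (c i).1].
Definition nu n (c : uword Z4 n) : zword n := [ffun i => (c i).2].

Definition red2 (x : Z4) : 'Z_2 := inZp (val x).
Definition alpha n (c : uword Z4 n) : uword 'Z_2 n :=
  [ffun i => (red2 (c i).1, red2 (c i).2)].

Definition phiC n (C : {set uword Z4 n}) : {set zword (n + n)} := (@phi n) @: C.
Definition muC n (C : {set uword Z4 n}) : {set zword n} := (@mu n) @: C.
Definition nuC n (C : {set uword Z4 n}) : {set zword n} := (@nu n) @: C.
Definition alphaC n (C : {set uword Z4 n}) : {set uword 'Z_2 n} := (@alpha n) @: C.

From HB Require Import structures.
From mathcomp Require Import all_boot all_order all_algebra.
From mathcomp Require Import ring.
Set Implicit Arguments. Unset Strict Implicit. Unset Printing Implicit Defensive.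
Import GRing.Theory.
Local Open Scope ring_scope.

(* The dual of phi(C) is psi(C), where psi(a + u b) = (-b, a + b): indeed
   <phi x, psi y> is the sum of the two components of the (Z4 + uZ4)-inner
   product <x, y>, and since C is closed under multiplication by u this sum
   vanishes on C exactly when <x, y> does. As psi differs from phi only by a
   sign on the first half of the coordinates, it preserves Lee weights, so
   phi(C) and its dual have the same Lee weight enumerator. If moreover nu(C)
   is self-orthogonal, <phi x, phi y> = <x, y>.1 + <x, y>.2 + 2 <nu x, nu y>
   vanishes on C, and phi(C), psi(C) have the same size, so phi(C) is
   self-dual. Parts (b) follow from <mu x, mu y> = <x, y>.1 and from
   reduction mod 2 being a ring morphism. *)

Lemma uipE (S : finComNzRingType) n (x y : uword S n) : uip x y =
  (\sum_(i < n) (x i).1 * (y i).1,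
   \sum_(i < n) ((x i).1 * (y i).2 + (x i).2 * (y i).1)).
Proof.
rewrite [LHS]surjective_pairing /uip.
rewrite (big_morph fst (id1 := 0) (op1 := +%R) (id2 := uzero S) (op2 := @uadd S)) //.
by rewrite (big_morph snd (id1 := 0) (op1 := +%R) (id2 := uzero S) (op2 := @uadd S)).
Qed.

Lemma udualP (S : finComNzRingType) n (C : {set uword S n}) y :
  reflect (forall x, x \in C -> uip x y = uzero S) (y \in udual C).
Proof. by rewrite inE; apply: (iffP forall_inP) => H x /H /eqP. Qed.

Lemma zdualP n (C : {set zword n}) y :
  reflect (forall x, x \in C -> zip4 x y = 0) (y \in zdual C).
Proof. by rewrite inE; apply: (iffP forall_inP) => H x /H /eqP. Qed.

Lemma uip_scale_u (S : finComNzRingType) n (x y : uword S n) :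
  uip (uscale_word (0, 1) x) y = (0, (uip x y).1).
Proof.
rewrite !uipE; congr pair.
  by apply: big1 => i _; rewrite ffunE /=; ring.
by apply: eq_bigr => i _; rewrite ffunE /=; ring.
Qed.

Lemma zlinear_imset (S : finComNzRingType) n m (f : uword S n -> zword m)
    (C : {set uword S n}) :
  ulinear C -> f (uzero_word S n) = [ffun _ => 0] ->
  {morph f : x y / uadd_word x y >-> [ffun i => x i + y i]} ->
  (forall r, exists s, forall x, f (uscale_word s x) = [ffun i => r * f x i]) ->
  zlinear (f @: C).
Proof.
move=> [C0 CD CZ] f0 fD fZ; split.
- by rewrite -f0 imset_f.
- by move=> _ _ /imsetP[x xC ->] /imsetP[y yC ->]; rewrite -fD imset_f ?CD.
- by move=> r _ /imsetP[x xC ->]; have [s <-] := fZ r; rewrite imset_f ?CZ.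
Qed.

Lemma ulinear_imset (S T : finComNzRingType) n m (f : uword S n -> uword T m)
    (C : {set uword S n}) :
  ulinear C -> f (uzero_word S n) = uzero_word T m ->
  {morph f : x y / uadd_word x y >-> uadd_word x y} ->
  (forall r, exists s, forall x, f (uscale_word s x) = uscale_word r (f x)) ->
  ulinear (f @: C).
Proof.
move=> [C0 CD CZ] f0 fD fZ; split.
- by rewrite -f0 imset_f.
- by move=> _ _ /imsetP[x xC ->] /imsetP[y yC ->]; rewrite -fD imset_f ?CD.
- by move=> r _ /imsetP[x xC ->]; have [s <-] := fZ r; rewrite imset_f ?CZ.
Qed.

Lemma split_lshift m n (j : 'I_m) : split (lshift n j) = inl j.
Proof. exact: (unsplitK (inl j)). Qed.

Lemma split_rshift m n (j : 'I_n) : split (rshift m j) = inr j.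
Proof. exact: (unsplitK (inr j)). Qed.

Section PhiPsi.
Variable n : nat.
Implicit Types (x y : uword Z4 n) (z : zword (n + n)).

Definition psi x : zword (n + n) :=
  [ffun i => match split i with
             | inl j => - (x j).2
             | inr j => (x j).1 + (x j).2
             end].

Definition unphi z : uword Z4 n :=
  [ffun j => (z (rshift n j) - z (lshift n j), z (lshift n j))].

Definition unpsi z : uword Z4 n :=
  [ffun j => (z (rshift n j) + z (lshift n j), - z (lshift n j))].

Lemma phiK : cancel (@phi n) unphi.
Proof.
move=> x; apply/ffunP => j.
by rewrite !ffunE split_lshift split_rshift addrK; case: (x j).
Qed.

Lemma psiK : cancel psi unpsi.
Proof.
move=> x; apply/ffunP => j.
by rewrite !ffunE split_lshift split_rshift addrK opprK; case: (x j).
Qed.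

Lemma unpsiK : cancel unpsi psi.
Proof.
move=> z; apply/ffunP => i; rewrite !ffunE.
by case: (split_ordP i) => j ->; rewrite ffunE /= ?opprK ?addrK.
Qed.

Lemma phi_inj : injective (@phi n). Proof. exact: can_inj phiK. Qed.
Lemma psi_inj : injective psi. Proof. exact: can_inj psiK. Qed.

Lemma zip4_phi_psi x y : zip4 (phi x) (psi y) = (uip x y).1 + (uip x y).2.
Proof.
rewrite /zip4 big_split_ord uipE /= -!big_split /=.
by apply: eq_bigr => i _; rewrite !ffunE split_lshift split_rshift; ring.
Qed.

Lemma zip4_phi_phi x y :
  zip4 (phi x) (phi y) = (uip x y).1 + (uip x y).2 + 2 * zip4 (nu x) (nu y).
Proof.
rewrite /zip4 big_split_ord uipE /= mulr_sumr -!big_split /=.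
by apply: eq_bigr => i _; rewrite !ffunE split_lshift split_rshift; ring.
Qed.

Lemma zip4_mu x y : zip4 (mu x) (mu y) = (uip x y).1.
Proof. by rewrite uipE; apply: eq_bigr => i _; rewrite !ffunE. Qed.

Lemma leeZ4N (a : Z4) : leeZ4 (- a) = leeZ4 a.
Proof. by case: a => [[|[|[|[|?]]]] ?]. Qed.

Lemma lee_weight_psi x : lee_weight (psi x) = lee_weight (phi x).
Proof.
rewrite /lee_weight !big_split_ord /=; congr (_ + _)%N; apply: eq_bigr => i _;
by rewrite !ffunE ?split_lshift ?split_rshift ?leeZ4N.
Qed.

Lemma zlinear_phiC (C : {set uword Z4 n}) : ulinear C -> zlinear (phiC C).
Proof.
move=> Clin; apply: zlinear_imset => //.
- by apply/ffunP => i; rewrite !ffunE; case: split => j; rewrite ffunE /uzero /= ?addr0.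
- by move=> x y; apply/ffunP => i; rewrite !ffunE; case: split => j;
     rewrite !ffunE /=; ring.
- move=> r; exists (r, 0) => x; apply/ffunP => i; rewrite !ffunE.
  by case: split => j; rewrite ffunE /=; ring.
Qed.

Lemma zdual_phiC (C : {set uword Z4 n}) :
  ulinear C -> zdual (phiC C) = psi @: udual C.
Proof.
move=> Clin; apply/setP => z; rewrite -[z]unpsiK mem_imset; last exact: psi_inj.
set y := unpsi z; apply/zdualP/udualP => [orth x xC | orth _ /imsetP[x xC ->]].
  have uxC : uscale_word (0, 1) x \in C by case: Clin => _ _; apply.
  have /eqP := orth _ (imset_f (@phi n) uxC).
  rewrite zip4_phi_psi uip_scale_u add0r /= => /eqP uip1.
  have /eqP := orth _ (imset_f (@phi n) xC).
  rewrite zip4_phi_psi uip1 add0r => /eqP uip2.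
  by rewrite [uip x y]surjective_pairing uip1 uip2.
by rewrite zip4_phi_psi orth // addr0.
Qed.

End PhiPsi.

Lemma card_imset_filter (T U : finType) (f : T -> U) (C : {set T}) (P : pred U) :
  injective f -> #|[set z in f @: C | P z]| = #|[set c in C | P (f c)]|.
Proof.
move=> f_inj; rewrite -(card_imset _ f_inj); apply: eq_card => z; rewrite !inE.
apply/andP/imsetP => [[/imsetP[c cC ->] Pc] | [c]].
  by exists c; rewrite // inE cC.
by rewrite inE => /andP[cC Pc] ->; rewrite imset_f.
Qed.

Lemma lee_count_imset (T : finType) m (f g : T -> zword m) (C : {set T}) w :
  injective f -> injective g -> (forall c, lee_weight (f c) = lee_weight (g c)) ->
  lee_count (f @: C) w = lee_count (g @: C) w.
Proof.
move=> f_inj g_inj fg; rewrite /lee_count !card_imset_filter //.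
by apply: eq_card => c; rewrite !inE fg.
Qed.

Lemma red20 : red2 0 = 0. Proof. exact: val_inj. Qed.

Lemma red2D (a b : Z4) : red2 (a + b) = red2 a + red2 b.
Proof. by case: a b => [[|[|[|[|?]]]] ?] [[|[|[|[|?]]]] ?] //; apply: val_inj. Qed.

Lemma red2M (a b : Z4) : red2 (a * b) = red2 a * red2 b.
Proof. by case: a b => [[|[|[|[|?]]]] ?] [[|[|[|[|?]]]] ?] //; apply: val_inj. Qed.

Lemma red2_lift (s : 'Z_2) : red2 (inZp (val s)) = s.
Proof. by case: s => [[|[|?]] ?] //; apply: val_inj. Qed.

Lemma uip_alpha n (x y : uword Z4 n) :
  uip (alpha x) (alpha y) = (red2 (uip x y).1, red2 (uip x y).2).
Proof.
rewrite !uipE /=; congr pair; rewrite (big_morph red2 red2D red20);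
by apply: eq_bigr => i _; rewrite !ffunE /= ?red2D !red2M.
Qed.

Section SelfOrthogonal.
Variables (n : nat) (C : {set uword Z4 n}).
Hypothesis C_orth : C \subset udual C.

Lemma uip_orth x y : x \in C -> y \in C -> uip x y = uzero Z4.
Proof. by move=> xC /(subsetP C_orth) /udualP; apply. Qed.

Lemma muC_orth : muC C \subset zdual (muC C).
Proof.
apply/subsetP => _ /imsetP[y yC ->]; apply/zdualP => _ /imsetP[x xC ->].
by rewrite zip4_mu uip_orth.
Qed.

Lemma alphaC_orth : alphaC C \subset udual (alphaC C).
Proof.
apply/subsetP => _ /imsetP[y yC ->]; apply/udualP => _ /imsetP[x xC ->].
by rewrite uip_alpha uip_orth // red20.
Qed.

Lemma phiC_orth : nuC C \subset zdual (nuC C) -> phiC C \subset zdual (phiC C).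
Proof.
move=> nu_orth; apply/subsetP => _ /imsetP[y yC ->]; apply/zdualP.
move=> _ /imsetP[x xC ->].
have /zdualP/(_ _ (imset_f (@nu n) xC)) nu_xy := subsetP nu_orth _ (imset_f (@nu n) yC).
by rewrite zip4_phi_phi nu_xy uip_orth // mulr0 !addr0.
Qed.

End SelfOrthogonal.

Lemma zlinear_muC n (C : {set uword Z4 n}) : ulinear C -> zlinear (muC C).
Proof.
move=> Clin; apply: zlinear_imset => //; first by apply/ffunP => i; rewrite !ffunE.
  by move=> x y; apply/ffunP => i; rewrite !ffunE.
by move=> r; exists (r, 0) => x; apply/ffunP => i; rewrite !ffunE.
Qed.

Lemma ulinear_alphaC n (C : {set uword Z4 n}) : ulinear C -> ulinear (alphaC C).
Proof.
move=> Clin; apply: ulinear_imset => //.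
- by apply/ffunP => i; rewrite !ffunE /= red20.
- by move=> x y; apply/ffunP => i; rewrite !ffunE /= !red2D.
- move=> r; exists (inZp (val r.1), inZp (val r.2)) => x; apply/ffunP => i.
  by rewrite !ffunE /= !red2D !red2M !red2_lift.
Qed.

Section SelfDual.
Variables (n : nat) (C : {set uword Z4 n}).
Hypotheses (Clin : ulinear C) (C_self_dual : C = udual C).

Lemma zdual_phiC_self_dual : zdual (phiC C) = @psi n @: C.
Proof. by rewrite zdual_phiC // -C_self_dual. Qed.

Lemma formally_self_dual_phiC : formally_self_dual (phiC C).
Proof.
split=> [|w]; first exact: zlinear_phiC.
rewrite zdual_phiC_self_dual; apply: lee_count_imset => //.
- exact: phi_inj.
- exact: psi_inj.
- by move=> c; rewrite lee_weight_psi.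
Qed.

Lemma z_self_dual_phiC : nuC C \subset zdual (nuC C) -> z_self_dual (phiC C).
Proof.
move=> nu_orth; split; first exact: zlinear_phiC.
apply/eqP; rewrite eqEcard phiC_orth //=; last by rewrite -C_self_dual.
by rewrite zdual_phiC_self_dual !card_imset //; [exact: phi_inj | exact: psi_inj].
Qed.

End SelfDual.

Theorem theorem4p4 (n : nat) (C : {set uword Z4 n}) :
  u_self_dual C ->
  [/\ formally_self_dual (phiC C),
      z_self_orthogonal (muC C) /\ u_self_orthogonal (alphaC C) &
      (z_self_orthogonal (nuC C) -> z_self_dual (phiC C))].
Proof.
move=> [Clin C_self_dual].
have C_orth : C \subset udual C by rewrite -C_self_dual.
split; first exact: formally_self_dual_phiC.
- split; split.
  + exact: zlinear_muC.
  + exact: muC_orth.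
  + exact: ulinear_alphaC.
  + exact: alphaC_orth.
- by move=> [_ nu_orth]; apply: z_self_dual_phiC.
Qed.
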